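(* Let $\mathbf A$ be a finite subdirectly irreducible cBCK-algebra and let $\mathbf B$ be a subalgebra of $\mathbf A$. If there exist $a,b\in B$ such that $\gcd(\mathrm{h}_A(a),\mathrm{h}_A(b))=1$, then the universe $B$ is a downset of $\mathbf A$ (i.e., $x\in B$ and $y\le x$ in $\mathbf A$ imply $y\in B$).
   Context: A BCK-algebra is an algebra $(A,\ominus,0)$ of type $(2,0)$ satisfying $((x\ominus y)\ominus(x\ominus z))\ominus(z\ominus y)=0$, $x\ominus 0=x$, $0\ominus x=0$, and ($x\ominus y=0$ and $y\ominus x=0$ imply $x=y$); it is ordered by $x\le y$ iff $x\ominus y=0$. A cBCK-algebra is a BCK-algebra satisfying $x\ominus(x\ominus y)=y\ominus(y\ominus x)$; its order is a meet-semilattice with $x\wedge y=x\ominus(x\ominus y)$. Finite subdirectly irreducible cBCK-algebras are, as posets, rooted trees with root $0$ (with a unique atom if nontrivial). For $a\in A$, $\mathrm{h}_A(a)=|[0,a]|-1$ is the height of $a$ in $\mathbf A$. *)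

From mathcomp Require Import all_boot.
Set Implicit Arguments. Unset Strict Implicit. Unset Printing Implicit Defensive.

Section BCK.
Variables (T : finType) (sub : T -> T -> T) (z : T).

Definition bck_le (x y : T) : bool := sub x y == z.

Definition is_BCK : Prop :=
  [/\ (forall x y w, sub (sub (sub x y) (sub x w)) (sub w y) = z),
      (forall x, sub x z = x),
      (forall x, sub z x = z) &
      (forall x y, sub x y = z -> sub y x = z -> x = y)].

Definition is_cBCK : Prop :=
  is_BCK /\ forall x y, sub x (sub x y) = sub y (sub y x).

Definition is_congruence (th : rel T) : Prop :=
  [/\ reflexive th, symmetric th, transitive th &
      forall x1 x2 y1 y2, th x1 x2 -> th y1 y2 -> th (sub x1 y1) (sub x2 y2)].

(* subdirectly irreducible: nontrivial, and the non-identity congruences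
   have a common pair (a,b) with a <> b (i.e. there is a monolith). *)
Definition subdirectly_irreducible : Prop :=
  1 < #|T| /\
  exists a b : T, a != b /\
    forall th : rel T, is_congruence th ->
      (exists x y, x != y /\ th x y) -> th a b.

Definition is_subalgebra (B : {set T}) : Prop :=
  z \in B /\ forall x y, x \in B -> y \in B -> sub x y \in B.

Definition height (a : T) : nat := #|[set y | bck_le y a]|.-1.

Definition is_downset (B : {set T}) : Prop :=
  forall x y, x \in B -> bck_le y x -> y \in B.
End BCK.

From mathcomp Require Import all_boot zify.
Set Implicit Arguments. Unset Strict Implicit. Unset Printing Implicit Defensive.

(* In a subdirectly irreducible BCK-algebra every nonzero ideal contains a
   fixed nonzero element (the monolith); applied to the polar ideals
   {a | a ⊓ t = 0} this shows that two nonzero elements have a nonzero meet.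
   Hence a finite subdirectly irreducible cBCK-algebra has an atom u lying
   below every nonzero element, every interval [0, x] is a chain, and heights
   are additive: h(d) = h(d ⊖ c) + h(c) for c ≤ d.  A subalgebra B is closed
   under meets, so it has a least nonzero element c, and additivity shows that
   h(c) divides the height of every element of B.  The gcd hypothesis forces
   h(c) = 1, i.e. c = u.  Finally, if y < x then y ≤ x ⊖ u, and x ⊖ u lies in
   B and has smaller height than x, so B is a downset by induction on height. *)

Section BCKTheory.
Variables (T : finType) (sub : T -> T -> T) (z : T).

Local Notation "x ⊖ y" := (sub x y) (at level 50, left associativity).
Local Notation "x ≼ y" := (x ⊖ y = z) (at level 70).
Local Notation "x ⊓ y" := (x ⊖ (x ⊖ y)) (at level 40, left associativity).
Local Notation height := (height sub z).

Definition lower (x : T) : {set T} := [set y | y ⊖ x == z].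

Definition interval (c d : T) : {set T} := [set y | (c ⊖ y == z) && (y ⊖ d == z)].

Definition is_ideal (I : pred T) : Prop :=
  z \in I /\ forall x y, x ⊖ y \in I -> y \in I -> x \in I.

Definition ideal_rel (I : pred T) : rel T :=
  fun x y => (x ⊖ y \in I) && (y ⊖ x \in I).

Section BCK.
Hypothesis bckA : is_BCK sub z.

Lemma sub_sub_le x y w : (x ⊖ y) ⊖ (x ⊖ w) ≼ w ⊖ y.
Proof. by case: bckA. Qed.

Lemma subx0 x : x ⊖ z = x.
Proof. by case: bckA. Qed.

Lemma sub0x x : z ⊖ x = z.
Proof. by case: bckA. Qed.

Lemma le_anti x y : x ≼ y -> y ≼ x -> x = y.
Proof. by case: bckA => _ _ _; apply. Qed.

Lemma subxx x : x ⊖ x = z.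
Proof. by have := sub_sub_le x z z; rewrite !subx0. Qed.

Lemma le_trans x y w : x ≼ y -> y ≼ w -> x ≼ w.
Proof. by move=> xy yw; have := sub_sub_le x w y; rewrite xy yw !subx0. Qed.

Lemma le_sub2l x y w : y ≼ w -> x ⊖ w ≼ x ⊖ y.
Proof. by move=> yw; have := sub_sub_le x w y; rewrite yw subx0. Qed.

Lemma sub_le x y : x ⊖ y ≼ x.
Proof. by have := le_sub2l x (sub0x y); rewrite subx0. Qed.

Lemma le0 x : x ≼ z -> x = z.
Proof. by move=> x0; apply: le_anti x0 (sub0x x). Qed.

Lemma gt_neq0 x y : y ≼ x -> y != x -> x != z.
Proof. by move=> yx; apply: contra_neq => x0; rewrite x0 in yx *; apply: le0. Qed.

Lemma sub_exch x y w : x ⊖ y ⊖ w = x ⊖ w ⊖ y.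
Proof.
suff le_exch x' y' w' : x' ⊖ y' ⊖ w' ≼ x' ⊖ w' ⊖ y' by apply: le_anti.
apply: (@le_trans _ ((x' ⊖ y') ⊖ (x' ⊓ w'))); last exact: sub_sub_le.
by apply: le_sub2l; have := sub_sub_le x' z w'; rewrite !subx0.
Qed.

Lemma sub_sub2r_le x y w : (x ⊖ w) ⊖ (y ⊖ w) ≼ x ⊖ y.
Proof. by rewrite sub_exch; apply: sub_sub_le. Qed.

Lemma le_sub2r x y w : x ≼ y -> x ⊖ w ≼ y ⊖ w.
Proof. by move=> xy; have := sub_sub2r_le x y w; rewrite xy subx0. Qed.

Lemma lower_refl x : x \in lower x.
Proof. by rewrite inE subxx. Qed.

Lemma heightE x : height x = #|lower x|.-1.
Proof. by []. Qed.

Lemma card_lower_gt0 x : 0 < #|lower x|.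
Proof. by apply/card_gt0P; exists x; apply: lower_refl. Qed.

Lemma height_eq0 x : (height x == 0) = (x == z).
Proof.
have x_lower : x \in lower x := lower_refl x.
have z_lower : z \in lower x by rewrite inE sub0x.
rewrite heightE -subn1 subn_eq0; apply/card_le1_eqP/eqP => [lower1|->].
  by rewrite (lower1 x z).
by move=> y y'; rewrite !inE => /eqP/le0 -> /eqP/le0 ->.
Qed.

Lemma height0 : height z = 0.
Proof. by apply/eqP; rewrite height_eq0. Qed.

Lemma height_gt0 x : x != z -> 0 < height x.
Proof. by rewrite lt0n height_eq0. Qed.

Lemma height_lt x y : y ≼ x -> y != x -> height y < height x.
Proof.
move=> yx yNx; suff : #|lower y| < #|lower x|.
  by rewrite !heightE; have := card_lower_gt0 y; lia.
apply: proper_card; rewrite properE; apply/andP; split.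
  by apply/subsetP => t; rewrite !inE => /eqP ty; apply/eqP; apply: le_trans ty yx.
apply/subsetPn; exists x; first exact: lower_refl.
by rewrite inE; apply: contra_neq yNx; apply: le_anti yx.
Qed.

Lemma height_ind (P : T -> Prop) :
  (forall x, (forall y, height y < height x -> P y) -> P x) -> forall x, P x.
Proof.
move=> IH x; move: {2}(height x) (erefl (height x)) => n.
elim/ltn_ind: n x => n IHn x hx; apply: IH => y; rewrite hx => lt_yx.
exact: IHn lt_yx y erefl.
Qed.

Lemma ideal_le I x y : is_ideal I -> x ≼ y -> y \in I -> x \in I.
Proof. by case=> I0 closedI xy yI; apply: closedI yI; rewrite xy. Qed.

Lemma ideal_rel_congruence I : is_ideal I -> is_congruence sub (ideal_rel I).
Proof.
move=> idI; have [I0 _] := idI.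
have rel_trans : transitive (ideal_rel I).
  move=> y x w /andP[xy yx] /andP[yw wy]; apply/andP; split.
    by apply: (proj2 idI _ (x ⊖ y)) => //; apply: ideal_le idI _ yw; apply: sub_sub_le.
  by apply: (proj2 idI _ (w ⊖ y)) => //; apply: ideal_le idI _ yx; apply: sub_sub_le.
split=> // [x | x y | x1 x2 y1 y2 /andP[x12 x21] /andP[y12 y21]].
- by rewrite /ideal_rel subxx I0.
- by rewrite /ideal_rel andbC.
apply: (rel_trans (x2 ⊖ y1)); apply/andP; split.
- by apply: ideal_le idI _ x12; apply: sub_sub2r_le.
- by apply: ideal_le idI _ x21; apply: sub_sub2r_le.
- by apply: ideal_le idI _ y21; apply: sub_sub_le.
- by apply: ideal_le idI _ y12; apply: sub_sub_le.
Qed.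

Lemma monolith : subdirectly_irreducible sub ->
  exists2 w, w != z & forall I, is_ideal I -> (exists2 a, a \in I & a != z) -> w \in I.
Proof.
move=> [_ [a [b [aNb monoAB]]]].
have abI I : is_ideal I -> (exists2 t, t \in I & t != z) -> ideal_rel I a b.
  move=> idI [t tI t_neq0]; apply: monoAB (ideal_rel_congruence idI) _.
  by exists t, z; rewrite /ideal_rel subx0 sub0x tI (proj1 idI).
have [ab0|abN0] := eqVneq (a ⊖ b) z; last first.
  by exists (a ⊖ b) => // I idI /(abI I idI)/andP[].
exists (b ⊖ a) => [|I idI /(abI I idI)/andP[] //].
by apply: contra_neq aNb; apply: le_anti.
Qed.

Section Commutative.
Hypothesis subC : forall x y, x ⊓ y = y ⊓ x.

Lemma meet_le_r x y : x ⊓ y ≼ y.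
Proof. by rewrite subC; apply: sub_le. Qed.

Lemma meet_idr x y : y ≼ x -> x ⊓ y = y.
Proof. by move=> yx; rewrite subC yx subx0. Qed.

Lemma meet_greatest w x y : w ≼ x -> w ≼ y -> w ≼ x ⊓ y.
Proof.
move=> wx wy; have := le_sub2l x (le_sub2l x wy).
by rewrite subC wx subx0.
Qed.

Lemma polar_ideal t : is_ideal [pred a | a ⊓ t == z].
Proof.
split=> [|x y]; first by rewrite inE sub0x.
rewrite !inE => /eqP xy_t /eqP y_t; apply/eqP.
have m_le_y : x ⊓ t ≼ y.
  have := meet_greatest (le_sub2r y (sub_le x (x ⊖ t)))
                        (le_trans (sub_le (x ⊓ t) y) (meet_le_r x t)).
  by rewrite xy_t subx0.
by apply: le0; have := meet_greatest m_le_y (meet_le_r x t); rewrite y_t.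
Qed.

Lemma lower_sub_imset c d :
  c ≼ d -> lower (d ⊖ c) = [set d ⊖ y | y in interval c d].
Proof.
move=> cd; apply/setP => e; rewrite inE; apply/eqP/imsetP => [e_le|[y]].
  have ed : e ≼ d := le_trans e_le (sub_le d c).
  exists (d ⊖ e); last by rewrite meet_idr.
  by rewrite inE sub_le -{1}(meet_idr cd) (le_sub2l d e_le) eqxx.
by rewrite inE => /andP[/eqP cy _] ->; apply: le_sub2l.
Qed.

Lemma sub_interval_inj c d : {in interval c d &, injective (sub d)}.
Proof.
move=> y y'; rewrite !inE => /andP[_ /eqP yd] /andP[_ /eqP y'd] eq_sub.
by rewrite -(meet_idr yd) eq_sub meet_idr.
Qed.

Lemma setI_lower_interval c d : c ≼ d -> lower c :&: interval c d = [set c].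
Proof.
move=> cd; apply/setP => y; rewrite !inE.
apply/andP/eqP => [[/eqP yc /andP[/eqP cy _]] | ->]; first exact: le_anti.
by rewrite subxx cd eqxx.
Qed.

Section SubdirectlyIrreducible.
Hypothesis SI : subdirectly_irreducible sub.

Lemma meet_neq0 a t : a != z -> t != z -> a ⊓ t != z.
Proof.
move=> a_neq0 t_neq0; apply/eqP => at0.
have [w w_neq0 monoI] := monolith SI.
have w_t : w ⊓ t == z by apply: (monoI _ (polar_ideal t)); exists a; rewrite ?inE ?at0.
have : w ⊓ w == z by apply: (monoI _ (polar_ideal w)); exists t; rewrite ?inE // subC.
by rewrite subxx subx0 (negbTE w_neq0).
Qed.

Lemma least_nonzero (B : {set T}) :
  (forall a c, a \in B -> c \in B -> a ⊓ c \in B) ->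
  forall e, e \in B -> e != z ->
  exists c, [/\ c \in B, c != z & forall a, a \in B -> a != z -> c ≼ a].
Proof.
move=> meetB e eB e_neq0.
case: (@arg_minnP _ e (fun c => (c \in B) && (c != z)) height); first by rewrite eB.
move=> c /andP[cB c_neq0] c_min; exists c; split=> // a aB a_neq0.
have m_eq_c : a ⊓ c = c.
  apply/eqP; apply: contraT => mNc.
  have := c_min (a ⊓ c); rewrite meetB // meet_neq0 // leqNgt => /(_ isT)/negP.
  by case; apply: height_lt mNc; apply: meet_le_r.
by rewrite -{1}m_eq_c; apply: sub_le.
Qed.

Lemma exists_atom : exists2 u, u != z & forall a, a != z -> u ≼ a.
Proof.
have [w w_neq0 _] := monolith SI.
have [u [_ u_neq0 u_least]] := @least_nonzero setT (fun _ _ _ _ => in_setT _) w (in_setT w) w_neq0.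
by exists u => // a; apply: u_least; apply: in_setT.
Qed.

End SubdirectlyIrreducible.

Section Atom.
Variable u : T.
Hypotheses (u_neq0 : u != z) (atom_le : forall a, a != z -> u ≼ a).

Lemma le_sub_atom x y : y ≼ x -> y != x -> y ≼ x ⊖ u.
Proof.
move=> yx yNx; have xy_neq0 : x ⊖ y != z by apply: contra_neq yNx; apply: le_anti.
by have := le_sub2l x (atom_le xy_neq0); rewrite meet_idr.
Qed.

Lemma height_sub_atom x : x != z -> height (x ⊖ u) < height x.
Proof.
move=> x_neq0; apply: height_lt (sub_le x u) _; apply: contra_neq u_neq0 => xu_eq_x.
by rewrite -(meet_idr (atom_le x_neq0)) xu_eq_x subxx.
Qed.

Lemma lower_chain x y y' : y ≼ x -> y' ≼ x -> y ≼ y' \/ y' ≼ y.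
Proof.
elim/height_ind: x y y' => x IH y y' yx y'x.
have [->|yNx] := eqVneq y x; first by right.
have [->|y'Nx] := eqVneq y' x; first by left.
by apply: IH (height_sub_atom (gt_neq0 yx yNx)) _ _ (le_sub_atom yx yNx) (le_sub_atom y'x y'Nx).
Qed.

Lemma lower_split c d : c ≼ d -> lower d = lower c :|: interval c d.
Proof.
move=> cd; apply/setP => y; rewrite !inE; apply/idP/idP => [/eqP yd|].
  by case: (lower_chain yd cd) => ->; rewrite yd eqxx ?orbT.
by case/orP=> [/eqP yc|/andP[_ //]]; apply/eqP; apply: le_trans yc cd.
Qed.

Lemma card_lower_sub c d : c ≼ d -> #|lower (d ⊖ c)| + #|lower c| = #|lower d| + 1.
Proof.
move=> cd; rewrite lower_sub_imset // (card_in_imset (@sub_interval_inj c d)).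
by rewrite (lower_split cd) -(cards1 c) -(setI_lower_interval cd) cardsUI addnC.
Qed.

Lemma height_sub c d : c ≼ d -> height d = height (d ⊖ c) + height c.
Proof.
move=> cd; have := card_lower_sub cd; rewrite !heightE.
by have := card_lower_gt0 c; have := card_lower_gt0 (d ⊖ c); lia.
Qed.

Lemma height_eq1 x : height x = 1 -> x = u.
Proof.
move=> hx1; have x_neq0 : x != z by rewrite -height_eq0 hx1.
have [//|uNx] := eqVneq u x.
have := height_lt (atom_le x_neq0) uNx.
by rewrite hx1 ltnS leqn0 height_eq0 (negbTE u_neq0).
Qed.

Section Subalgebra.
Variable B : {set T}.
Hypothesis subB : forall x y, x \in B -> y \in B -> x ⊖ y \in B.

Lemma height_least_dvd c :
  c \in B -> c != z -> (forall a, a \in B -> a != z -> c ≼ a) ->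
  forall e, e \in B -> height c %| height e.
Proof.
move=> cB c_neq0 c_least; elim/height_ind => e IH eB.
have [->|e_neq0] := eqVneq e z; first by rewrite height0 dvdn0.
have ce := c_least e eB e_neq0.
rewrite (height_sub ce) dvdn_addl //; apply: IH _ _ (subB eB cB).
by rewrite (height_sub ce) -{1}[height (e ⊖ c)]addn0 ltn_add2l height_gt0.
Qed.

Lemma subalgebra_downset : u \in B -> is_downset sub z B.
Proof.
move=> uB x y xB /eqP; elim/height_ind: x xB => x IH xB yx.
have [->//|yNx] := eqVneq y x.
exact: IH (height_sub_atom (gt_neq0 yx yNx)) (subB xB uB) (le_sub_atom yx yNx).
Qed.

End Subalgebra.
End Atom.
End Commutative.
End BCK.
End BCKTheory.

Theorem mainTheorem3 (T : finType) (sub : T -> T -> T) (z : T) (B : {set T}) :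
  is_cBCK sub z ->
  subdirectly_irreducible sub ->
  is_subalgebra sub z B ->
  (exists a b, [/\ a \in B, b \in B & gcdn (height sub z a) (height sub z b) = 1]) ->
  is_downset sub z B.
Proof.
move=> [bckA subC] SI [_ subB] [a [b [aB bB gcd_ab]]].
have [u u_neq0 atom_le] := exists_atom bckA subC SI.
have [e eB e_neq0] : exists2 e, e \in B & e != z.
  have [a0|] := eqVneq a z; last by exists a.
  have [b0|] := eqVneq b z; last by exists b.
  by move: gcd_ab; rewrite a0 b0 height0.
have meetB x y : x \in B -> y \in B -> sub x (sub x y) \in B.
  by move=> xB yB; apply: subB _ _ xB (subB _ _ xB yB).
have [c [cB c_neq0 c_least]] := least_nonzero bckA subC SI meetB eB e_neq0.
have height_c1 : height sub z c = 1.
  apply/eqP; rewrite -dvdn1 -gcd_ab dvdn_gcd.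
  by rewrite !(height_least_dvd bckA subC u_neq0 atom_le subB cB c_neq0 c_least).
apply: (subalgebra_downset bckA subC u_neq0 atom_le subB).
by rewrite -(height_eq1 bckA u_neq0 atom_le height_c1).
Qed.
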